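(* Let $d\geq 1$, let $\delta$ be a sufficiently small positive real number, let $P$ be a large positive integer, and let $1\leq q\leq P^{\delta}$, $1\leq a\leq q$ be integers with $(a,q)=1$. For $\alpha\in\mathfrak{M}(q,a)$, writing $\alpha=a/q+\beta$, we have $$F(\alpha)=q^{-2d-1}S(q,a)I(\beta)+O(P^{2d+2\delta}).$$
   Context: For an integer $d\geq 1$ define $f_d$: if $d=2k$ ($k\geq1$), $f_d(x_1,\ldots,x_d)=\prod_{i=1}^{k}(x_{2i-1}^2+x_{2i}^2)$; if $d=2k+1$ ($k\geq 0$), $f_d(x_1,\ldots,x_d)=x_1\prod_{i=1}^{k}(x_{2i}^2+x_{2i+1}^2)$. Let $f(x_1,\ldots,x_{2d+1})=f_d(x_1,\ldots,x_d)+f_d(x_{d+1},\ldots,x_{2d})-x_{2d+1}^d$. Let $e(\alpha)=e^{2\pi i\alpha}$, $B=\{1,\ldots,P\}^{2d+1}$, $F(\alpha)=\sum_{{\bf x}\in B}e(\alpha f({\bf x}))$, $\mathfrak{M}(q,a)=\{\alpha\in\mathbb{R}:|\alpha-a/q|\leq P^{\delta-d}\}$, $S(q,a)=\sum_{{\bf z}\bmod q}e\left(\frac{a}{q}f({\bf z})\right)$ (sum over ${\bf z}\in\{1,\ldots,q\}^{2d+1}$), and $I(\beta)=\int_{[0,P]^{2d+1}}e(\beta f(\xi))\,d\xi$. The implied constant in $O$ depends at most on $d$. *)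

From Stdlib Require Import Reals Arith.
From Coquelicot Require Import Coquelicot.
Open Scope R_scope.

(* Vectors are functions nat -> R, with coordinates x_1, ..., x_n at indices 1..n. *)
Definition upd (x : nat -> R) (k : nat) (v : R) : nat -> R :=
  fun i => if Nat.eqb i k then v else x i.

Fixpoint pairprod (x : nat -> R) (o : nat) (k : nat) : R :=
  match k with
  | O => 1
  | S j => pairprod x o j * ((x (o + 2 * k - 1)%nat) ^ 2 + (x (o + 2 * k)%nat) ^ 2)
  end.

(* f_d(x_{o+1}, ..., x_{o+d}) *)
Definition fd (d : nat) (x : nat -> R) (o : nat) : R :=
  if Nat.even d then pairprod x o (Nat.div2 d)
  else x (o + 1)%nat * pairprod x (o + 1) (Nat.div2 d).

Definition f (d : nat) (x : nat -> R) : R :=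
  fd d x 0 + fd d x d - (x (2 * d + 1)%nat) ^ d.

Definition e (t : R) : C := (cos (2 * PI * t), sin (2 * PI * t)).

Fixpoint csum1 (N : nat) (h : nat -> C) : C :=
  match N with
  | O => RtoC 0
  | S m => Cplus (csum1 m h) (h (S m))
  end.

Fixpoint boxsum (n N : nat) (g : (nat -> R) -> C) : C :=
  match n with
  | O => g (fun _ => 0)
  | S m => csum1 N (fun t => boxsum m N (fun x => g (upd x (S m) (INR t))))
  end.

Fixpoint boxint (n : nat) (P : R) (g : (nat -> R) -> R) : R :=
  match n with
  | O => g (fun _ => 0)
  | S m => RInt (fun t => boxint m P (fun x => g (upd x (S m) t))) 0 P
  end.

Definition F (d P : nat) (alpha : R) : C :=
  boxsum (2 * d + 1) P (fun x => e (alpha * f d x)).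

(* S(q,a) = sum_{z mod q} e(a/q f(z)), z in {1..q}^{2d+1} *)
Definition Sqa (d q a : nat) : C :=
  boxsum (2 * d + 1) q (fun z => e (INR a / INR q * f d z)).

Definition I (d P : nat) (beta : R) : C :=
  (boxint (2 * d + 1) (INR P) (fun xi => cos (2 * PI * (beta * f d xi))),
   boxint (2 * d + 1) (INR P) (fun xi => sin (2 * PI * (beta * f d xi)))).

(* Write alpha = a/q + beta, so that e(alpha f(x)) = e(a f(x) / q) e(beta f(x)).  Since f has
   integer coefficients, the first factor only depends on x modulo q; the second varies slowly:
   on [0,P]^(2d+1) it is Lipschitz in each coordinate with constant O(|beta| P^(d-1)) = O(P^(delta-1)).
   Summing one coordinate at a time, each complete block of q consecutive values of the slow
   factor may be replaced by its mean over an interval of length q at a cost O(q P^(delta-1)) per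
   term, and the incomplete last block costs O(q).  Induction over the 2d+1 coordinates gives
   the error O(q P^(2d) (P^delta + 1)) = O(P^(2d+2 delta)). *)

From Pilot Require Import Defs.
From Stdlib Require Import Reals Arith Lia Lra ZArith FunctionalExtensionality.
From Coquelicot Require Import Coquelicot.
Open Scope R_scope.

Lemma upd_same x k v : upd x k v k = v.
Proof. unfold upd. now rewrite Nat.eqb_refl. Qed.

Lemma upd_other x k v i : i <> k -> upd x k v i = x i.
Proof. intro Hik. unfold upd. now destruct (Nat.eqb_spec i k). Qed.

Lemma upd_upd x k v w : upd (upd x k v) k w = upd x k w.
Proof. apply functional_extensionality; intro i. unfold upd. now destruct (Nat.eqb i k). Qed.

Lemma upd_comm x i k a b : i <> k -> upd (upd x i a) k b = upd (upd x k b) i a.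
Proof.
  intro Hik. apply functional_extensionality; intro j. unfold upd.
  destruct (Nat.eqb_spec j k), (Nat.eqb_spec j i); subst; auto; lia.
Qed.

(** * Lipschitz functions on the box [0,P]^n and their iterated integrals *)

Definition in_box (P : R) (x : nat -> R) : Prop := forall i, 0 <= x i <= P.

Definition box_lipschitz (P L : R) (g : (nat -> R) -> R) : Prop :=
  forall x i s, in_box P x -> 0 <= s <= P -> Rabs (g (upd x i s) - g x) <= L * Rabs (s - x i).

Definition box_bounded (P M : R) (g : (nat -> R) -> R) : Prop :=
  forall x, in_box P x -> Rabs (g x) <= M.

Lemma in_box_upd P x k t : in_box P x -> 0 <= t <= P -> in_box P (upd x k t).
Proof. intros Hx Ht i. unfold upd. now destruct (Nat.eqb i k). Qed.

Lemma box_lipschitz_upd P L g k t :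
  0 <= L -> 0 <= t <= P -> box_lipschitz P L g -> box_lipschitz P L (fun x => g (upd x k t)).
Proof.
  intros HL Ht Hg x i s Hx Hs.
  destruct (Nat.eq_dec i k) as [->|Hik].
  - rewrite upd_upd, Rminus_eq_0, Rabs_R0.
    apply Rmult_le_pos; [exact HL | apply Rabs_pos].
  - rewrite upd_comm by exact Hik.
    rewrite <- (upd_other x k t i Hik). apply Hg; [apply in_box_upd|]; assumption.
Qed.

Lemma box_lipschitz_coord P L g x k t t' :
  box_lipschitz P L g -> in_box P x -> 0 <= t <= P -> 0 <= t' <= P ->
  Rabs (g (upd x k t) - g (upd x k t')) <= L * Rabs (t - t').
Proof.
  intros Hg Hx Ht Ht'.
  rewrite <- (upd_upd x k t' t). rewrite <- (upd_same x k t') at 3.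
  apply Hg; [apply in_box_upd|]; assumption.
Qed.

Lemma lipschitz_continuous (v : R -> R) K :
  (forall s t, Rabs (v s - v t) <= K * Rabs (s - t)) -> forall x, continuous v x.
Proof.
  intros Hv x. apply filterlim_locally. intros eps.
  assert (HK : 0 < Rabs K + 1) by (pose proof (Rabs_pos K); lra).
  assert (Hd : 0 < eps / (Rabs K + 1)) by (apply Rdiv_lt_0_compat; [apply cond_pos | lra]).
  exists (mkposreal _ Hd). intros y Hy.
  change (Rabs (y - x) < eps / (Rabs K + 1)) in Hy. change (Rabs (v y - v x) < eps).
  apply Rle_lt_trans with ((Rabs K + 1) * Rabs (y - x)).
  - eapply Rle_trans; [apply Hv|]. apply Rmult_le_compat_r; [apply Rabs_pos|].
    pose proof (Rle_abs K); lra.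
  - apply (Rmult_lt_compat_l (Rabs K + 1)) in Hy; [|lra].
    replace ((Rabs K + 1) * (eps / (Rabs K + 1))) with (pos eps) in Hy by (field; lra).
    exact Hy.
Qed.

Definition clamp (P t : R) : R := Rmax 0 (Rmin P t).

Lemma clamp_id P t : 0 <= t <= P -> clamp P t = t.
Proof. intros. unfold clamp, Rmax, Rmin. repeat destruct Rle_dec; lra. Qed.

Lemma clamp_range P t : 0 <= P -> 0 <= clamp P t <= P.
Proof. intros. unfold clamp, Rmax, Rmin. repeat destruct Rle_dec; lra. Qed.

Lemma clamp_1lipschitz P s t : 0 <= P -> Rabs (clamp P s - clamp P t) <= Rabs (s - t).
Proof. intros. unfold clamp, Rmax, Rmin. repeat destruct Rle_dec; split_Rabs; lra. Qed.

(* A Lipschitz function on [0,P] need not be continuous at 0 and P as a function on R;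
   its composite with [clamp P] is, and agrees with it on [0,P]. *)
Lemma ex_RInt_lipschitz (u : R -> R) K P a b :
  (forall s t, 0 <= s <= P -> 0 <= t <= P -> Rabs (u s - u t) <= K * Rabs (s - t)) ->
  0 <= a -> a <= b -> b <= P -> ex_RInt u a b.
Proof.
  intros Hu Ha Hab Hb.
  apply (ex_RInt_ext (fun t => u (clamp P t))).
  - intros t Ht. rewrite Rmin_left, Rmax_right in Ht by lra. rewrite clamp_id; lra.
  - apply (@ex_RInt_continuous R_CompleteNormedModule). intros z _.
    apply (lipschitz_continuous _ (Rabs K)). intros s t.
    eapply Rle_trans; [apply Hu; apply clamp_range; lra|].
    eapply Rle_trans; [apply Rmult_le_compat_r; [apply Rabs_pos | apply Rle_abs]|].
    apply Rmult_le_compat_l; [apply Rabs_pos | apply clamp_1lipschitz; lra].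
Qed.

Lemma Rabs_inv_mul_le k u e : 0 < k -> Rabs u <= k * e -> Rabs (/ k * u) <= e.
Proof.
  intros Hk Hu. rewrite Rabs_mult, Rabs_inv, (Rabs_pos_eq k) by lra.
  apply (Rmult_le_reg_l k); [exact Hk|]. rewrite <- Rmult_assoc, Rinv_r, Rmult_1_l by lra. exact Hu.
Qed.

Lemma RInt_Rminus (u v : R -> R) a b : ex_RInt u a b -> ex_RInt v a b ->
  RInt (fun t => u t - v t) a b = RInt u a b - RInt v a b.
Proof. intros Hu Hv. exact (RInt_minus u v a b Hu Hv). Qed.

Lemma boxint_diff_le m : forall P L1 L2 eps g1 g2, 0 <= P -> 0 <= L1 -> 0 <= L2 ->
  box_lipschitz P L1 g1 -> box_lipschitz P L2 g2 ->
  (forall x, in_box P x -> Rabs (g1 x - g2 x) <= eps) ->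
  Rabs (boxint m P g1 - boxint m P g2) <= P ^ m * eps.
Proof.
  induction m as [|m IH]; intros P L1 L2 eps g1 g2 HP HL1 HL2 Hg1 Hg2 Heps; simpl.
  - rewrite Rmult_1_l. apply Heps. intro; lra.
  - set (slice g t := boxint m P (fun x => g (upd x (S m) t))).
    assert (Hex : forall g L, 0 <= L -> box_lipschitz P L g -> ex_RInt (slice g) 0 P).
    { intros g L HL Hg. apply (ex_RInt_lipschitz _ (P ^ m * L) P); try lra.
      intros s t Hs Ht. rewrite Rmult_assoc. unfold slice.
      apply (IH P L L); auto using box_lipschitz_upd.
      intros x Hx. apply (box_lipschitz_coord P L); assumption. }
    change (Rabs (RInt (slice g1) 0 P - RInt (slice g2) 0 P) <= P * P ^ m * eps).
    rewrite <- RInt_Rminus by eauto.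
    replace (P * P ^ m * eps) with ((P - 0) * (P ^ m * eps)) by ring.
    apply abs_RInt_le_const; [lra | apply (@ex_RInt_minus R_NormedModule); eauto |].
    intros t Ht. apply (IH P L1 L2); auto using box_lipschitz_upd.
    intros x Hx. apply Heps, in_box_upd; assumption.
Qed.

Lemma boxint_zero m P : boxint m P (fun _ => 0) = 0.
Proof.
  induction m as [|m IH]; simpl; [reflexivity|].
  rewrite (RInt_ext _ (fun _ => 0)) by (intros; apply IH).
  rewrite RInt_const. apply Rmult_0_r.
Qed.

Lemma boxint_abs_le m P L M g : 0 <= P -> 0 <= L ->
  box_lipschitz P L g -> box_bounded P M g -> Rabs (boxint m P g) <= P ^ m * M.
Proof.
  intros HP HL Hg HM.
  replace (boxint m P g) with (boxint m P g - boxint m P (fun _ => 0)) by (rewrite boxint_zero; ring).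
  apply (boxint_diff_le m P L 0); auto; try lra.
  - intros x i s _ _. rewrite Rminus_eq_0, Rabs_R0. lra.
  - intros x Hx. rewrite Rminus_0_r. auto.
Qed.

Fixpoint rsum1 (N : nat) (u : nat -> R) : R :=
  match N with O => 0 | S m => rsum1 m u + u (S m) end.

Fixpoint rboxsum (n N : nat) (g : (nat -> R) -> R) : R :=
  match n with
  | O => g (fun _ => 0)
  | S m => rsum1 N (fun t => rboxsum m N (fun x => g (upd x (S m) (INR t))))
  end.

Lemma rsum1_ext N u v : (forall t, (1 <= t <= N)%nat -> u t = v t) -> rsum1 N u = rsum1 N v.
Proof.
  induction N as [|N IH]; intros Huv; simpl; [reflexivity|].
  rewrite IH by (intros; apply Huv; lia). rewrite Huv by lia. reflexivity.
Qed.

Lemma rsum1_plus N u v : rsum1 N (fun t => u t + v t) = rsum1 N u + rsum1 N v.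
Proof. induction N as [|N IH]; simpl; [ring | rewrite IH; ring]. Qed.

Lemma rsum1_minus N u v : rsum1 N (fun t => u t - v t) = rsum1 N u - rsum1 N v.
Proof. induction N as [|N IH]; simpl; [ring | rewrite IH; ring]. Qed.

Lemma rsum1_scal N c u : rsum1 N (fun t => c * u t) = c * rsum1 N u.
Proof. induction N as [|N IH]; simpl; [ring | rewrite IH; ring]. Qed.

Lemma rsum1_abs_le N u M :
  (forall t, (1 <= t <= N)%nat -> Rabs (u t) <= M) -> Rabs (rsum1 N u) <= INR N * M.
Proof.
  induction N as [|N IH]; intros Hu.
  - simpl. rewrite Rabs_R0. lra.
  - change (rsum1 (S N) u) with (rsum1 N u + u (S N)). rewrite S_INR.
    eapply Rle_trans; [apply Rabs_triang|].
    assert (Rabs (rsum1 N u) <= INR N * M) by (apply IH; intros; apply Hu; lia).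
    assert (Rabs (u (S N)) <= M) by (apply Hu; lia).
    lra.
Qed.

Lemma rsum1_split M k u : rsum1 (M + k) u = rsum1 M u + rsum1 k (fun s => u (M + s)%nat).
Proof.
  induction k as [|k IH]; simpl; [rewrite Nat.add_0_r; ring|].
  rewrite Nat.add_succ_r. simpl. rewrite IH. ring.
Qed.

Lemma csum1_fst N h : fst (csum1 N h) = rsum1 N (fun t => fst (h t)).
Proof. induction N as [|N IH]; simpl; [reflexivity | now rewrite IH]. Qed.

Lemma csum1_snd N h : snd (csum1 N h) = rsum1 N (fun t => snd (h t)).
Proof. induction N as [|N IH]; simpl; [reflexivity | now rewrite IH]. Qed.

Lemma boxsum_fst n N g : fst (boxsum n N g) = rboxsum n N (fun x => fst (g x)).
Proof.
  revert g; induction n as [|n IH]; intros g; simpl; [reflexivity|].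
  rewrite csum1_fst. apply rsum1_ext. intros. apply IH.
Qed.

Lemma boxsum_snd n N g : snd (boxsum n N g) = rboxsum n N (fun x => snd (g x)).
Proof.
  revert g; induction n as [|n IH]; intros g; simpl; [reflexivity|].
  rewrite csum1_snd. apply rsum1_ext. intros. apply IH.
Qed.

Lemma rboxsum_plus n N g1 g2 : rboxsum n N (fun x => g1 x + g2 x) = rboxsum n N g1 + rboxsum n N g2.
Proof.
  revert g1 g2; induction n as [|n IH]; intros; simpl; [reflexivity|].
  rewrite <- rsum1_plus. apply rsum1_ext. intros. apply IH.
Qed.

Lemma rboxsum_minus n N g1 g2 : rboxsum n N (fun x => g1 x - g2 x) = rboxsum n N g1 - rboxsum n N g2.
Proof.
  revert g1 g2; induction n as [|n IH]; intros; simpl; [reflexivity|].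
  rewrite <- rsum1_minus. apply rsum1_ext. intros. apply IH.
Qed.

Definition nat_point (x : nat -> R) : Prop := forall i, exists k : nat, x i = INR k.

Lemma nat_point_upd x k t : nat_point x -> nat_point (upd x k (INR t)).
Proof. intros Hx i. unfold upd. destruct (Nat.eqb i k); eauto. Qed.

Lemma nat_point_zero : nat_point (fun _ => 0).
Proof. intro i. now exists O. Qed.

Lemma rboxsum_ext n N g1 g2 :
  (forall x, nat_point x -> g1 x = g2 x) -> rboxsum n N g1 = rboxsum n N g2.
Proof.
  revert g1 g2; induction n as [|n IH]; intros g1 g2 Hg; simpl.
  - apply Hg, nat_point_zero.
  - apply rsum1_ext. intros. apply IH. intros. apply Hg, nat_point_upd; assumption.
Qed.

Lemma rboxsum_abs_le n N M g :
  (forall x, nat_point x -> Rabs (g x) <= M) -> Rabs (rboxsum n N g) <= INR N ^ n * M.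
Proof.
  revert g; induction n as [|n IH]; intros g Hg; simpl.
  - rewrite Rmult_1_l. apply Hg, nat_point_zero.
  - rewrite Rmult_assoc. apply rsum1_abs_le. intros. apply IH.
    intros. apply Hg, nat_point_upd; assumption.
Qed.

(** * One coordinate: a periodic sequence against a Lipschitz function *)

Section PeriodicTimesLipschitz.

Variables (q N : nat) (c : nat -> R) (h : R -> R) (A B K : R).
Hypothesis q_pos : (1 <= q)%nat.
Hypothesis c_periodic : forall t, c (t + q)%nat = c t.
Hypothesis c_bound : forall t, Rabs (c t) <= A.
Hypothesis h_bound : forall t, 0 <= t <= INR N -> Rabs (h t) <= B.
Hypothesis h_lipschitz : forall s t, 0 <= s <= INR N -> 0 <= t <= INR N ->
  Rabs (h s - h t) <= K * Rabs (s - t).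
Hypothesis K_nonneg : 0 <= K.

Local Notation Q := (INR q).
Local Notation c_mean := (/ INR q * rsum1 q c).

Let Q_pos : 0 < Q.
Proof. apply lt_0_INR. lia. Qed.

Let A_nonneg : 0 <= A.
Proof. eapply Rle_trans; [apply Rabs_pos | apply (c_bound O)]. Qed.

Let ex_RInt_h a b : 0 <= a -> a <= b -> b <= INR N -> ex_RInt h a b.
Proof. intros. apply (ex_RInt_lipschitz h K (INR N)); assumption. Qed.

Lemma c_mean_abs_le : Rabs c_mean <= A.
Proof. apply Rabs_inv_mul_le; [exact Q_pos|]. apply rsum1_abs_le. auto. Qed.

Lemma c_periodic_mul j s : c (j * q + s)%nat = c s.
Proof.
  induction j as [|j IH]; simpl; [reflexivity|].
  replace (q + j * q + s)%nat with (j * q + s + q)%nat by lia. now rewrite c_periodic.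
Qed.

Lemma h_minus_mean_le a u : 0 <= a -> a + Q <= INR N -> a <= u <= a + Q ->
  Rabs (h u - / Q * RInt h a (a + Q)) <= K * Q.
Proof.
  intros Ha HaQ Hu.
  assert (Hex : ex_RInt h a (a + Q)) by (apply ex_RInt_h; lra).
  replace (h u - / Q * RInt h a (a + Q)) with (/ Q * RInt (fun v => h u - h v) a (a + Q)).
  2:{ rewrite RInt_Rminus by (auto using ex_RInt_const). rewrite RInt_const.
      change (/ Q * ((a + Q - a) * h u - RInt h a (a + Q)) = h u - / Q * RInt h a (a + Q)).
      field. lra. }
  apply Rabs_inv_mul_le; [exact Q_pos|].
  replace (Q * (K * Q)) with ((a + Q - a) * (K * Q)) by ring.
  apply abs_RInt_le_const; [lra | apply (@ex_RInt_minus R_NormedModule); auto using ex_RInt_const |].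
  intros v Hv. eapply Rle_trans; [apply h_lipschitz; lra|].
  apply Rmult_le_compat_l; [exact K_nonneg | split_Rabs; lra].
Qed.

Lemma rsum1_full_periods j : (j * q <= N)%nat ->
  Rabs (rsum1 (j * q) (fun t => c t * h (INR t)) - c_mean * RInt h 0 (INR (j * q)))
    <= A * K * Q * INR (j * q).
Proof.
  induction j as [|j IH]; intros Hj.
  - simpl. rewrite RInt_point. change (Rabs (0 - c_mean * 0) <= A * K * Q * 0).
    rewrite Rmult_0_r, Rminus_0_r, Rabs_R0. lra.
  - replace (S j * q)%nat with (j * q + q)%nat in * by lia.
    set (a := INR (j * q)) in IH |- *.
    assert (Ha : 0 <= a) by apply pos_INR.
    assert (HaQ : a + Q <= INR N) by (unfold a; rewrite <- plus_INR; apply le_INR; lia).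
    rewrite rsum1_split, plus_INR. fold a.
    rewrite <- (RInt_Chasles h 0 a (a + Q)) by (apply ex_RInt_h; lra).
    change (plus ?u ?v) with (u + v).
    set (block_mean := / Q * RInt h a (a + Q)).
    assert (Hblock : rsum1 q (fun s => c (j * q + s)%nat * h (INR (j * q + s)))
                     - c_mean * RInt h a (a + Q)
                   = rsum1 q (fun s => c s * (h (a + INR s) - block_mean))).
    { transitivity (rsum1 q (fun s => c s * h (a + INR s) - block_mean * c s)).
      - rewrite rsum1_minus, rsum1_scal. unfold block_mean. f_equal; [|ring].
        apply rsum1_ext. intros. rewrite c_periodic_mul, plus_INR. reflexivity.
      - apply rsum1_ext. intros. ring. }
    assert (Hblock_le : Rabs (rsum1 q (fun s => c s * (h (a + INR s) - block_mean)))
                        <= Q * (A * (K * Q))).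
    { apply rsum1_abs_le. intros s Hs. rewrite Rabs_mult.
      apply Rmult_le_compat; [apply Rabs_pos | apply Rabs_pos | apply c_bound |].
      apply h_minus_mean_le; [lra | lra |].
      assert (INR s <= Q) by (apply le_INR; lia). pose proof (pos_INR s). lra. }
    rewrite <- Hblock in Hblock_le. specialize (IH ltac:(lia)).
    split_Rabs; lra.
Qed.

Lemma rsum1_periodic_times_lipschitz :
  Rabs (rsum1 N (fun t => c t * h (INR t)) - c_mean * RInt h 0 (INR N))
    <= A * (K * Q * INR N + 2 * B * Q).
Proof.
  assert (B_nonneg : 0 <= B).
  { eapply Rle_trans; [apply Rabs_pos | apply (h_bound 0)]. split; [lra | apply pos_INR]. }
  set (j := (N / q)%nat). set (r := (N mod q)%nat).
  assert (HN : N = (j * q + r)%nat) by (unfold j, r; rewrite (Nat.div_mod_eq N q) at 1; lia).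
  assert (Hr : (r < q)%nat) by (apply Nat.mod_upper_bound; lia).
  set (a := INR (j * q)).
  assert (Ha : 0 <= a) by apply pos_INR.
  assert (HaN : a <= INR N) by (apply le_INR; lia).
  assert (HNa : INR N - a <= Q).
  { unfold a. rewrite HN at 1. rewrite plus_INR.
    assert (INR r <= Q) by (apply le_INR; lia). lra. }
  assert (Hfull := rsum1_full_periods j ltac:(lia)). fold a in Hfull.
  assert (Htail : Rabs (rsum1 r (fun s => c (j * q + s)%nat * h (INR (j * q + s)))) <= Q * (A * B)).
  { eapply Rle_trans; [apply rsum1_abs_le with (M := A * B)|].
    - intros t Ht. rewrite Rabs_mult.
      apply Rmult_le_compat; [apply Rabs_pos | apply Rabs_pos | apply c_bound |].
      apply h_bound. split; [apply pos_INR | apply le_INR; lia].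
    - apply Rmult_le_compat_r; [nra | apply le_INR; lia]. }
  assert (Hrest : Rabs (c_mean * RInt h a (INR N)) <= A * (Q * B)).
  { rewrite Rabs_mult. apply Rmult_le_compat; [apply Rabs_pos | apply Rabs_pos | apply c_mean_abs_le |].
    eapply Rle_trans.
    { apply abs_RInt_le_const; [lra | apply ex_RInt_h; lra | intros t Ht; apply h_bound; lra]. }
    apply Rmult_le_compat_r; assumption. }
  rewrite HN at 1. rewrite rsum1_split.
  rewrite <- (RInt_Chasles h 0 a (INR N)) by (apply ex_RInt_h; lra).
  change (plus ?u ?v) with (u + v).
  assert (A * K * Q * a <= A * K * Q * INR N)
    by (apply Rmult_le_compat_l; [repeat apply Rmult_le_pos; lra | exact HaN]).
  eapply Rle_trans with (Rabs (rsum1 (j * q) (fun t => c t * h (INR t)) - c_mean * RInt h 0 a)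
     + Rabs (rsum1 r (fun s => c (j * q + s)%nat * h (INR (j * q + s))))
     + Rabs (c_mean * RInt h a (INR N))).
  - split_Rabs; lra.
  - nra.
Qed.

End PeriodicTimesLipschitz.

Definition qperiodic (q : nat) (c : (nat -> R) -> R) : Prop :=
  forall x, nat_point x -> forall i, c (upd x i (x i + INR q)) = c x.

Lemma qperiodic_upd q c k t : qperiodic q c -> qperiodic q (fun x => c (upd x k (INR t))).
Proof.
  intros Hc x Hx i.
  destruct (Nat.eq_dec i k) as [->|Hik].
  - now rewrite !upd_upd.
  - rewrite upd_comm by exact Hik. rewrite <- (upd_other x k (INR t) i Hik).
    apply Hc, nat_point_upd, Hx.
Qed.

Lemma rboxsum_slice_periodic m q c t : qperiodic q c ->
  rboxsum m q (fun x => c (upd x (S m) (INR (t + q)))) = rboxsum m q (fun x => c (upd x (S m) (INR t))).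
Proof.
  intro Hc. apply rboxsum_ext. intros x Hx.
  rewrite plus_INR, <- (upd_same x (S m) (INR t)) at 1. rewrite <- (upd_upd x (S m) (INR t)).
  apply Hc, nat_point_upd, Hx.
Qed.

Lemma boxint_slice_lipschitz m P L g k s t : 0 <= P -> 0 <= L -> box_lipschitz P L g ->
  0 <= s <= P -> 0 <= t <= P ->
  Rabs (boxint m P (fun x => g (upd x k s)) - boxint m P (fun x => g (upd x k t)))
    <= P ^ m * L * Rabs (s - t).
Proof.
  intros HP HL Hg Hs Ht. rewrite Rmult_assoc.
  apply (boxint_diff_le m P L L); auto using box_lipschitz_upd.
  intros x Hx. apply (box_lipschitz_coord P L); assumption.
Qed.

Lemma boxint_slice_abs_le m P L M g k t : 0 <= P -> 0 <= L ->
  box_lipschitz P L g -> box_bounded P M g -> 0 <= t <= P ->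
  Rabs (boxint m P (fun x => g (upd x k t))) <= P ^ m * M.
Proof.
  intros HP HL Hg HM Ht. apply (boxint_abs_le m P L); auto using box_lipschitz_upd.
  intros x Hx. apply HM, in_box_upd; assumption.
Qed.

Lemma rsum1_slices_periodic_times_lipschitz m q N L c h :
  (1 <= q)%nat -> 0 <= L -> qperiodic q c -> (forall x, nat_point x -> Rabs (c x) <= 1) ->
  box_lipschitz (INR N) L h -> box_bounded (INR N) 1 h ->
  let C t := rboxsum m q (fun x => c (upd x (S m) (INR t))) in
  let H t := boxint m (INR N) (fun x => h (upd x (S m) t)) in
  Rabs (rsum1 N (fun t => C t * H (INR t)) - / INR q * rsum1 q C * RInt H 0 (INR N))
    <= INR q ^ m * (INR q * INR N ^ m * (L * INR N + 2)).
Proof.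
  intros Hq HL Hc Hc1 Hh Hh1 C H.
  assert (HN : 0 <= INR N) by apply pos_INR.
  assert (HC_bound : forall t, Rabs (C t) <= INR q ^ m).
  { intro t. rewrite <- (Rmult_1_r (INR q ^ m)). apply rboxsum_abs_le.
    intros x Hx. apply Hc1, nat_point_upd, Hx. }
  assert (HH_bound : forall t, 0 <= t <= INR N -> Rabs (H t) <= INR N ^ m).
  { intros t Ht. rewrite <- (Rmult_1_r (INR N ^ m)). apply (boxint_slice_abs_le m _ L); assumption. }
  eapply Rle_trans.
  - apply (rsum1_periodic_times_lipschitz q N C H (INR q ^ m) (INR N ^ m) (INR N ^ m * L) Hq);
      [| exact HC_bound | exact HH_bound | |].
    + intro t. apply rboxsum_slice_periodic, Hc.
    + intros s t Hs Ht. apply boxint_slice_lipschitz; assumption.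
    + apply Rmult_le_pos; [apply pow_le|]; lra.
  - right. ring.
Qed.

Lemma Rabs_sub_scaled_le a b c k e1 e2 : 0 < k ->
  Rabs (a - / k * b) <= e1 -> Rabs (b - c) <= k * e2 -> Rabs (a - / k * c) <= e1 + e2.
Proof.
  intros Hk Hab Hbc.
  assert (Hbc' : Rabs (/ k * b - / k * c) <= e2)
    by (rewrite <- Rmult_minus_distr_l; apply Rabs_inv_mul_le; assumption).
  replace (a - / k * c) with ((a - / k * b) + (/ k * b - / k * c)) by ring.
  eapply Rle_trans; [apply Rabs_triang | lra].
Qed.

Lemma rboxsum_periodic_times_lipschitz n : forall q N L c h,
  (1 <= q)%nat -> 0 <= L -> qperiodic q c -> (forall x, nat_point x -> Rabs (c x) <= 1) ->
  box_lipschitz (INR N) L h -> box_bounded (INR N) 1 h ->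
  Rabs (rboxsum n N (fun x => c x * h x) - / INR q ^ n * rboxsum n q c * boxint n (INR N) h)
    <= INR n * INR q * INR N ^ (n - 1) * (L * INR N + 2).
Proof.
  induction n as [|m IH]; intros q N L c h Hq HL Hc Hc1 Hh Hh1.
  - simpl. replace (_ - _) with 0 by field. rewrite Rabs_R0. lra.
  - assert (HQm : 0 < INR q ^ m) by (apply pow_lt, lt_0_INR; lia).
    set (C t := rboxsum m q (fun x => c (upd x (S m) (INR t)))).
    set (H t := boxint m (INR N) (fun x => h (upd x (S m) t))).
    set (E := INR m * INR q * INR N ^ (m - 1) * (L * INR N + 2)).
    assert (Hslices : forall t, (1 <= t <= N)%nat ->
      Rabs (rboxsum m N (fun x => c (upd x (S m) (INR t)) * h (upd x (S m) (INR t)))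
            - / INR q ^ m * (C t * H (INR t))) <= E).
    { intros t Ht. rewrite <- Rmult_assoc.
      assert (0 <= INR t <= INR N) by (split; [apply pos_INR | apply le_INR; lia]).
      apply IH; [exact Hq | exact HL | apply qperiodic_upd, Hc | | apply box_lipschitz_upd; auto |].
      - intros x Hx. apply Hc1, nat_point_upd, Hx.
      - intros x Hx. apply Hh1, in_box_upd; assumption. }
    assert (Hinner := rsum1_abs_le N _ E Hslices).
    rewrite rsum1_minus, rsum1_scal in Hinner.
    assert (Houter := rsum1_slices_periodic_times_lipschitz m q N L c h Hq HL Hc Hc1 Hh Hh1).
    change (rboxsum (S m) N (fun x => c x * h x))
      with (rsum1 N (fun t => rboxsum m N (fun x => c (upd x (S m) (INR t)) * h (upd x (S m) (INR t))))).
    change (rboxsum (S m) q c) with (rsum1 q C).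
    change (boxint (S m) (INR N) h) with (RInt H 0 (INR N)).
    replace (/ INR q ^ S m * rsum1 q C * RInt H 0 (INR N))
      with (/ INR q ^ m * (/ INR q * rsum1 q C * RInt H 0 (INR N))) by (simpl; rewrite Rinv_mult; ring).
    eapply Rle_trans; [apply (Rabs_sub_scaled_le _ _ _ _ _ _ HQm Hinner Houter)|].
    right. unfold E. destruct m as [|m]; [simpl; ring|].
    replace (S (S m) - 1)%nat with (S m) by lia. replace (S m - 1)%nat with m by lia.
    rewrite (S_INR (S m)). simpl. ring.
Qed.

(** * Growth and integrality of the form f *)

(* The coordinatewise Lipschitz constant O(P^(k-1)) is multiplied out by [P], so that k = 0
   is allowed. *)
Definition poly_growth (g : (nat -> R) -> R) (k : nat) : Prop :=
  exists A B, 0 <= A /\ 0 <= B /\ forall P, 0 <= P ->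
    (forall x, in_box P x -> Rabs (g x) <= A * P ^ k) /\
    (forall x i s, in_box P x -> 0 <= s <= P ->
       Rabs (g (upd x i s) - g x) * P <= B * P ^ k * Rabs (s - x i)).

Lemma poly_growth_coord j : poly_growth (fun x => x j) 1.
Proof.
  exists 1, 1. do 2 (split; [lra|]). intros P HP. split.
  - intros x Hx. rewrite pow_1, Rmult_1_l, Rabs_pos_eq; apply Hx.
  - intros x i s Hx Hs. rewrite pow_1, Rmult_1_l. unfold upd.
    destruct (Nat.eqb_spec j i) as [->|].
    + right. ring.
    + rewrite Rminus_eq_0, Rabs_R0, Rmult_0_l. apply Rmult_le_pos; [lra | apply Rabs_pos].
Qed.

Lemma poly_growth_one : poly_growth (fun _ => 1) 0.
Proof.
  exists 1, 0. do 2 (split; [lra|]). intros P HP. split.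
  - intros. rewrite Rabs_R1. simpl. lra.
  - intros. rewrite Rminus_eq_0, Rabs_R0. simpl. lra.
Qed.

Lemma poly_growth_mul g1 g2 k1 k2 :
  poly_growth g1 k1 -> poly_growth g2 k2 -> poly_growth (fun x => g1 x * g2 x) (k1 + k2).
Proof.
  intros (A1 & B1 & HA1 & HB1 & H1) (A2 & B2 & HA2 & HB2 & H2).
  exists (A1 * A2), (A1 * B2 + A2 * B1).
  split; [apply Rmult_le_pos; assumption|].
  split; [apply Rplus_le_le_0_compat; apply Rmult_le_pos; assumption|].
  intros P HP. destruct (H1 P HP) as [Hb1 Hl1], (H2 P HP) as [Hb2 Hl2]. rewrite pow_add. split.
  - intros x Hx. rewrite Rabs_mult.
    replace (A1 * A2 * (P ^ k1 * P ^ k2)) with ((A1 * P ^ k1) * (A2 * P ^ k2)) by ring.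
    apply Rmult_le_compat; auto using Rabs_pos.
  - intros x i s Hx Hs. set (y := upd x i s).
    assert (Hy : in_box P y) by (apply in_box_upd; assumption).
    assert (Hterm1 : Rabs (g1 y) * (Rabs (g2 y - g2 x) * P)
                 <= (A1 * P ^ k1) * (B2 * P ^ k2 * Rabs (s - x i)))
      by (apply Rmult_le_compat; [apply Rabs_pos | apply Rmult_le_pos; [apply Rabs_pos | exact HP]
                                 | apply Hb1, Hy | apply Hl2; assumption]).
    assert (Hterm2 : Rabs (g2 x) * (Rabs (g1 y - g1 x) * P)
                 <= (A2 * P ^ k2) * (B1 * P ^ k1 * Rabs (s - x i)))
      by (apply Rmult_le_compat; [apply Rabs_pos | apply Rmult_le_pos; [apply Rabs_pos | exact HP]
                                 | apply Hb2, Hx | apply Hl1; assumption]).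
    replace (g1 y * g2 y - g1 x * g2 x) with (g1 y * (g2 y - g2 x) + g2 x * (g1 y - g1 x)) by ring.
    eapply Rle_trans; [apply Rmult_le_compat_r; [exact HP | apply Rabs_triang]|].
    rewrite !Rabs_mult. lra.
Qed.

Lemma poly_growth_plus g1 g2 k :
  poly_growth g1 k -> poly_growth g2 k -> poly_growth (fun x => g1 x + g2 x) k.
Proof.
  intros (A1 & B1 & HA1 & HB1 & H1) (A2 & B2 & HA2 & HB2 & H2).
  exists (A1 + A2), (B1 + B2). do 2 (split; [lra|]).
  intros P HP. destruct (H1 P HP) as [Hb1 Hl1], (H2 P HP) as [Hb2 Hl2]. split.
  - intros x Hx. specialize (Hb1 x Hx). specialize (Hb2 x Hx).
    eapply Rle_trans; [apply Rabs_triang | lra].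
  - intros x i s Hx Hs. specialize (Hl1 x i s Hx Hs). specialize (Hl2 x i s Hx Hs).
    replace (g1 (upd x i s) + g2 (upd x i s) - (g1 x + g2 x))
      with ((g1 (upd x i s) - g1 x) + (g2 (upd x i s) - g2 x)) by ring.
    eapply Rle_trans; [apply Rmult_le_compat_r; [exact HP | apply Rabs_triang] | lra].
Qed.

Lemma poly_growth_opp g k : poly_growth g k -> poly_growth (fun x => - g x) k.
Proof.
  intros (A & B & HA & HB & H). exists A, B. do 2 (split; [assumption|]).
  intros P HP. destruct (H P HP) as [Hb Hl]. split.
  - intros. rewrite Rabs_Ropp. auto.
  - intros x i s Hx Hs. replace (- g (upd x i s) - - g x) with (- (g (upd x i s) - g x)) by ring.
    rewrite Rabs_Ropp. auto.
Qed.

Lemma poly_growth_pow g k m : poly_growth g k -> poly_growth (fun x => g x ^ m) (k * m).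
Proof.
  intro Hg. induction m as [|m IH].
  - rewrite Nat.mul_0_r. apply poly_growth_one.
  - replace (k * S m)%nat with (k + k * m)%nat by lia. apply (poly_growth_mul g); assumption.
Qed.

Lemma poly_growth_pairprod o k : poly_growth (fun x => pairprod x o k) (2 * k).
Proof.
  induction k as [|k IH]; [apply poly_growth_one|].
  replace (2 * S k)%nat with (2 * k + 1 * 2)%nat by lia.
  apply poly_growth_mul; [exact IH|].
  apply poly_growth_plus; apply poly_growth_pow, poly_growth_coord.
Qed.

Lemma poly_growth_fd d o : poly_growth (fun x => fd d x o) d.
Proof.
  unfold fd. pose proof (Nat.div2_odd d) as Hd. rewrite <- Nat.negb_even in Hd.
  set (k := Nat.div2 d) in *. clearbody k.
  destruct (Nat.even d); simpl in Hd; rewrite Hd.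
  - replace (k + (k + 0) + 0)%nat with (2 * k)%nat by lia. apply poly_growth_pairprod.
  - replace (k + (k + 0) + 1)%nat with (1 + 2 * k)%nat by lia.
    apply poly_growth_mul; [apply poly_growth_coord | apply poly_growth_pairprod].
Qed.

Lemma poly_growth_f d : poly_growth (Defs.f d) d.
Proof.
  change (poly_growth (fun x => fd d x 0 + fd d x d + - (x (2 * d + 1)%nat ^ d)) d).
  apply poly_growth_plus; [apply poly_growth_plus; apply poly_growth_fd|].
  apply poly_growth_opp. pose proof (poly_growth_pow _ _ d (poly_growth_coord (2 * d + 1))) as Hpow.
  now rewrite Nat.mul_1_l in Hpow.
Qed.

(* The two properties of polynomials with integer coefficients that make e(a f / q) q-periodic. *)
Definition int_shift_congr (q : nat) (g : (nat -> R) -> R) : Prop :=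
  forall x, nat_point x -> (exists z, g x = IZR z) /\
    forall i, exists z, g (upd x i (x i + INR q)) - g x = INR q * IZR z.

Lemma nat_point_shift q x i : nat_point x -> nat_point (upd x i (x i + INR q)).
Proof. intros Hx. destruct (Hx i) as [k ->]. rewrite <- plus_INR. apply nat_point_upd, Hx. Qed.

Section IntShiftCongr.

Variable q : nat.

Lemma int_shift_congr_coord j : int_shift_congr q (fun x => x j).
Proof.
  intros x Hx. split.
  - destruct (Hx j) as [k ->]. exists (Z.of_nat k). apply INR_IZR_INZ.
  - intro i. unfold upd. destruct (Nat.eqb_spec j i) as [->|].
    + exists 1%Z. ring.
    + exists 0%Z. ring.
Qed.

Lemma int_shift_congr_one : int_shift_congr q (fun _ => 1).
Proof. intros x Hx. split; [now exists 1%Z | intros; exists 0%Z; ring]. Qed.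

Lemma int_shift_congr_plus g1 g2 :
  int_shift_congr q g1 -> int_shift_congr q g2 -> int_shift_congr q (fun x => g1 x + g2 x).
Proof.
  intros H1 H2 x Hx. destruct (H1 x Hx) as [[a1 E1] S1], (H2 x Hx) as [[a2 E2] S2]. split.
  - exists (a1 + a2)%Z. rewrite plus_IZR. lra.
  - intro i. destruct (S1 i) as [z1 F1], (S2 i) as [z2 F2].
    exists (z1 + z2)%Z. rewrite plus_IZR. lra.
Qed.

Lemma int_shift_congr_opp g : int_shift_congr q g -> int_shift_congr q (fun x => - g x).
Proof.
  intros H x Hx. destruct (H x Hx) as [[a E] S]. split.
  - exists (- a)%Z. rewrite opp_IZR. lra.
  - intro i. destruct (S i) as [z F]. exists (- z)%Z. rewrite opp_IZR. lra.
Qed.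

Lemma int_shift_congr_mul g1 g2 :
  int_shift_congr q g1 -> int_shift_congr q g2 -> int_shift_congr q (fun x => g1 x * g2 x).
Proof.
  intros H1 H2 x Hx. destruct (H1 x Hx) as [[a1 E1] S1], (H2 x Hx) as [[a2 E2] S2]. split.
  - exists (a1 * a2)%Z. rewrite mult_IZR, E1, E2. reflexivity.
  - intro i. destruct (S1 i) as [z1 F1], (S2 i) as [z2 F2].
    destruct (H1 _ (nat_point_shift q x i Hx)) as [[b1 G1] _].
    set (y := upd x i (x i + INR q)) in *.
    exists (b1 * z2 + a2 * z1)%Z. rewrite plus_IZR, !mult_IZR.
    replace (g1 y * g2 y - g1 x * g2 x) with (g1 y * (g2 y - g2 x) + g2 x * (g1 y - g1 x)) by ring.
    rewrite F1, F2, G1, E2. ring.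
Qed.

Lemma int_shift_congr_pow g m : int_shift_congr q g -> int_shift_congr q (fun x => g x ^ m).
Proof.
  intro Hg. induction m as [|m IH]; [apply int_shift_congr_one|].
  apply (int_shift_congr_mul g); assumption.
Qed.

Lemma int_shift_congr_pairprod o k : int_shift_congr q (fun x => pairprod x o k).
Proof.
  induction k as [|k IH]; [apply int_shift_congr_one|].
  apply int_shift_congr_mul; [exact IH|].
  apply int_shift_congr_plus; apply int_shift_congr_pow, int_shift_congr_coord.
Qed.

Lemma int_shift_congr_fd d o : int_shift_congr q (fun x => fd d x o).
Proof.
  unfold fd. destruct (Nat.even d); [apply int_shift_congr_pairprod|].
  apply int_shift_congr_mul; [apply int_shift_congr_coord | apply int_shift_congr_pairprod].
Qed.

Lemma int_shift_congr_f d : int_shift_congr q (Defs.f d).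
Proof.
  change (int_shift_congr q (fun x => fd d x 0 + fd d x d + - (x (2 * d + 1)%nat ^ d))).
  apply int_shift_congr_plus; [apply int_shift_congr_plus; apply int_shift_congr_fd|].
  apply int_shift_congr_opp, int_shift_congr_pow, int_shift_congr_coord.
Qed.

End IntShiftCongr.

Lemma period_Z (T : R -> R) : (forall u k, T (u + 2 * INR k * PI) = T u) ->
  forall u k, T (u + 2 * IZR k * PI) = T u.
Proof.
  intros HT u k. destruct (Z_le_gt_dec 0 k).
  - rewrite <- (Z2Nat.id k), <- INR_IZR_INZ by lia. apply HT.
  - rewrite <- (HT (u + 2 * IZR k * PI) (Z.to_nat (- k))), INR_IZR_INZ, Z2Nat.id by lia.
    f_equal. rewrite opp_IZR. ring.
Qed.

Lemma qperiodic_phase (T : R -> R) q a d : (1 <= q)%nat ->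
  (forall u k, T (u + 2 * INR k * PI) = T u) ->
  qperiodic q (fun x => T (2 * PI * (INR a / INR q * Defs.f d x))).
Proof.
  intros Hq HT x Hx i.
  destruct (int_shift_congr_f q d x Hx) as [_ Hshift]. destruct (Hshift i) as [z Hz].
  assert (INR q <> 0) by (apply not_0_INR; lia).
  replace (2 * PI * (INR a / INR q * Defs.f d (upd x i (x i + INR q))))
    with (2 * PI * (INR a / INR q * Defs.f d x) + 2 * IZR (Z.of_nat a * z) * PI).
  - apply period_Z, HT.
  - rewrite mult_IZR, <- INR_IZR_INZ.
    replace (Defs.f d (upd x i (x i + INR q))) with (Defs.f d x + INR q * IZR z) by lra.
    field. assumption.
Qed.

Lemma cos_1lipschitz u v : Rabs (cos u - cos v) <= Rabs (u - v).
Proof.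
  destruct (MVT_abs cos (fun c => - sin c) v u) as [c [-> _]]; [intros; apply derivable_pt_lim_cos|].
  rewrite Rabs_Ropp. rewrite <- (Rmult_1_l (Rabs (u - v))) at 2.
  apply Rmult_le_compat_r; [apply Rabs_pos | apply Rabs_le, SIN_bound].
Qed.

Lemma sin_1lipschitz u v : Rabs (sin u - sin v) <= Rabs (u - v).
Proof.
  destruct (MVT_abs sin cos v u) as [c [-> _]]; [intros; apply derivable_pt_lim_sin|].
  rewrite <- (Rmult_1_l (Rabs (u - v))) at 2.
  apply Rmult_le_compat_r; [apply Rabs_pos | apply Rabs_le, COS_bound].
Qed.

Lemma box_lipschitz_phase (T : R -> R) P beta B d :
  (forall u v, Rabs (T u - T v) <= Rabs (u - v)) -> 0 < P ->
  (forall x i s, in_box P x -> 0 <= s <= P ->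
     Rabs (Defs.f d (upd x i s) - Defs.f d x) * P <= B * P ^ d * Rabs (s - x i)) ->
  box_lipschitz P (2 * PI * Rabs beta * (B * P ^ d / P)) (fun x => T (2 * PI * (beta * Defs.f d x))).
Proof.
  intros HT HP Hf x i s Hx Hs.
  assert (Hdf : Rabs (Defs.f d (upd x i s) - Defs.f d x) <= B * P ^ d / P * Rabs (s - x i)).
  { apply (Rmult_le_reg_r P); [exact HP|].
    replace (B * P ^ d / P * Rabs (s - x i) * P) with (B * P ^ d * Rabs (s - x i)) by (field; lra).
    apply Hf; assumption. }
  eapply Rle_trans; [apply HT|].
  replace (2 * PI * (beta * Defs.f d (upd x i s)) - 2 * PI * (beta * Defs.f d x))
    with ((2 * PI * beta) * (Defs.f d (upd x i s) - Defs.f d x)) by ring.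
  pose proof PI_RGT_0. pose proof (Rabs_pos beta).
  rewrite Rabs_mult, (Rabs_mult (2 * PI)), (Rabs_pos_eq (2 * PI)) by lra.
  replace (2 * PI * Rabs beta * (B * P ^ d / P) * Rabs (s - x i))
    with ((2 * PI * Rabs beta) * (B * P ^ d / P * Rabs (s - x i))) by ring.
  apply Rmult_le_compat_l; [nra | exact Hdf].
Qed.

(** * The major arc approximation *)

Definition cos_phase (d : nat) (t : R) (x : nat -> R) : R := cos (2 * PI * (t * Defs.f d x)).
Definition sin_phase (d : nat) (t : R) (x : nat -> R) : R := sin (2 * PI * (t * Defs.f d x)).

Lemma F_re_im d P theta beta :
  F d P (theta + beta) =
  (rboxsum (2 * d + 1) P (fun x => cos_phase d theta x * cos_phase d beta x)
   - rboxsum (2 * d + 1) P (fun x => sin_phase d theta x * sin_phase d beta x),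
   rboxsum (2 * d + 1) P (fun x => sin_phase d theta x * cos_phase d beta x)
   + rboxsum (2 * d + 1) P (fun x => cos_phase d theta x * sin_phase d beta x)).
Proof.
  unfold F. rewrite (surjective_pairing (boxsum _ _ _)), boxsum_fst, boxsum_snd.
  rewrite <- rboxsum_minus, <- rboxsum_plus. f_equal; apply rboxsum_ext; intros x _;
    unfold e, cos_phase, sin_phase; simpl; rewrite Rmult_plus_distr_r, !Rmult_plus_distr_l.
  - apply cos_plus.
  - rewrite sin_plus. ring.
Qed.

Lemma Sqa_re_im d q a :
  Sqa d q a = (rboxsum (2 * d + 1) q (cos_phase d (INR a / INR q)),
               rboxsum (2 * d + 1) q (sin_phase d (INR a / INR q))).
Proof. unfold Sqa. now rewrite (surjective_pairing (boxsum _ _ _)), boxsum_fst, boxsum_snd. Qed.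

Lemma Cmod_le_abs_re_im (z : C) : Cmod z <= Rabs (fst z) + Rabs (snd z).
Proof.
  destruct z as [u v]. unfold Cmod; simpl.
  rewrite <- (sqrt_Rsqr (Rabs u + Rabs v)) by (pose proof (Rabs_pos u); pose proof (Rabs_pos v); lra).
  apply sqrt_le_1_alt. pose proof (Rsqr_abs u). pose proof (Rsqr_abs v).
  pose proof (Rabs_pos u). pose proof (Rabs_pos v). unfold Rsqr in *. nra.
Qed.

(* Each of the four real products in e(a f / q) e(beta f) = (c1 + i c2) (h1 + i h2) is handled by
   [rboxsum_periodic_times_lipschitz]. *)
Lemma major_arc_approx d P q a alpha L :
  (1 <= q)%nat -> 0 <= L ->
  box_lipschitz (INR P) L (cos_phase d (alpha - INR a / INR q)) ->
  box_lipschitz (INR P) L (sin_phase d (alpha - INR a / INR q)) ->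
  Cmod (Cminus (F d P alpha)
          (Cmult (RtoC (/ (INR q ^ (2 * d + 1))))
                 (Cmult (Sqa d q a) (I d P (alpha - INR a / INR q)))))
    <= 4 * (INR (2 * d + 1) * INR q * INR P ^ (2 * d) * (L * INR P + 2)).
Proof.
  intros Hq HL Hlip1 Hlip2.
  set (n := (2 * d + 1)%nat). set (beta := alpha - INR a / INR q) in *.
  set (c1 := cos_phase d (INR a / INR q)). set (c2 := sin_phase d (INR a / INR q)).
  set (h1 := cos_phase d beta). set (h2 := sin_phase d beta).
  set (err c h := rboxsum n P (fun x => c x * h x) - / INR q ^ n * rboxsum n q c * boxint n (INR P) h).
  set (E := INR n * INR q * INR P ^ (2 * d) * (L * INR P + 2)).
  assert (Herr : forall c h, qperiodic q c -> (forall x, Rabs (c x) <= 1) ->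
            box_lipschitz (INR P) L h -> (forall x, Rabs (h x) <= 1) -> Rabs (err c h) <= E).
  { intros c h Hc Hc1 Hh Hh1. unfold E. replace (2 * d)%nat with (n - 1)%nat by (unfold n; lia).
    apply rboxsum_periodic_times_lipschitz; auto. intros x _. apply Hh1. }
  assert (Hc1 : qperiodic q c1) by (apply qperiodic_phase; [exact Hq | apply cos_period]).
  assert (Hc2 : qperiodic q c2) by (apply qperiodic_phase; [exact Hq | apply sin_period]).
  assert (Hcos : forall u, Rabs (cos u) <= 1) by (intro; apply Rabs_le, COS_bound).
  assert (Hsin : forall u, Rabs (sin u) <= 1) by (intro; apply Rabs_le, SIN_bound).
  pose proof (Herr c1 h1 Hc1 (fun _ => Hcos _) Hlip1 (fun _ => Hcos _)) as E11.
  pose proof (Herr c2 h2 Hc2 (fun _ => Hsin _) Hlip2 (fun _ => Hsin _)) as E22.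
  pose proof (Herr c2 h1 Hc2 (fun _ => Hsin _) Hlip1 (fun _ => Hcos _)) as E21.
  pose proof (Herr c1 h2 Hc1 (fun _ => Hcos _) Hlip2 (fun _ => Hsin _)) as E12.
  replace alpha with (INR a / INR q + beta) at 1 by (unfold beta; ring).
  rewrite F_re_im, Sqa_re_im. fold n c1 c2 h1 h2.
  change (I d P beta) with (boxint n (INR P) h1, boxint n (INR P) h2).
  eapply Rle_trans; [apply Cmod_le_abs_re_im|]. simpl.
  match goal with |- Rabs ?re + Rabs ?im <= _ =>
    replace re with (err c1 h1 - err c2 h2) by (unfold err; ring);
    replace im with (err c2 h1 + err c1 h2) by (unfold err; ring) end.
  pose proof (Rabs_triang (err c1 h1) (- err c2 h2)).
  pose proof (Rabs_triang (err c2 h1) (err c1 h2)). rewrite Rabs_Ropp in *.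
  unfold Rminus. lra.
Qed.

Lemma major_arc_error_le (P B delta beta : R) (d q : nat) :
  1 <= P -> 0 <= B -> 0 < delta ->
  INR q <= Rpower P delta -> Rabs beta <= Rpower P (delta - INR d) ->
  4 * (INR (2 * d + 1) * INR q * P ^ (2 * d) * (2 * PI * Rabs beta * (B * P ^ d / P) * P + 2))
    <= 4 * INR (2 * d + 1) * (2 * PI * B + 2) * Rpower P (2 * INR d + 2 * delta).
Proof.
  intros HP HB Hdelta Hq Hbeta.
  pose proof PI_RGT_0. pose proof (pos_INR q). pose proof (pos_INR (2 * d + 1)).
  set (Pd := Rpower P delta) in *.
  assert (HPd : 1 <= Pd) by (unfold Pd; rewrite <- (Rpower_O P) by lra; apply Rle_Rpower; lra).
  assert (Hphase : Rabs beta * P ^ d <= Pd).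
  { unfold Pd. replace delta with ((delta - INR d) + INR d) by ring.
    rewrite Rpower_plus, Rpower_pow by lra.
    apply Rmult_le_compat_r; [apply pow_le; lra | exact Hbeta]. }
  assert (Hpow : Rpower P (2 * INR d + 2 * delta) = P ^ (2 * d) * (Pd * Pd)).
  { unfold Pd. rewrite <- Rpower_plus, <- Rpower_pow, mult_INR, <- Rpower_plus by lra.
    f_equal. simpl. ring. }
  rewrite Hpow.
  replace (2 * PI * Rabs beta * (B * P ^ d / P) * P) with (2 * PI * B * (Rabs beta * P ^ d))
    by (field; lra).
  assert (0 < P ^ (2 * d)) by (apply pow_lt; lra).
  assert (Hfactor : INR q * (2 * PI * B * (Rabs beta * P ^ d) + 2) <= Pd * ((2 * PI * B + 2) * Pd)).
  { assert (2 * PI * B * (Rabs beta * P ^ d) <= 2 * PI * B * Pd)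
      by (apply Rmult_le_compat_l; [nra | exact Hphase]).
    assert (0 <= 2 * PI * B * (Rabs beta * P ^ d)).
    { apply Rmult_le_pos; [nra|]. apply Rmult_le_pos; [apply Rabs_pos | apply pow_le; lra]. }
    apply Rmult_le_compat; lra. }
  replace (4 * (INR (2 * d + 1) * INR q * P ^ (2 * d) * (2 * PI * B * (Rabs beta * P ^ d) + 2)))
    with ((4 * INR (2 * d + 1) * P ^ (2 * d)) * (INR q * (2 * PI * B * (Rabs beta * P ^ d) + 2)))
    by ring.
  replace (4 * INR (2 * d + 1) * (2 * PI * B + 2) * (P ^ (2 * d) * (Pd * Pd)))
    with ((4 * INR (2 * d + 1) * P ^ (2 * d)) * (Pd * ((2 * PI * B + 2) * Pd))) by ring.
  apply Rmult_le_compat_l; [nra | exact Hfactor].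
Qed.

Theorem lemma3p1 :
  forall d : nat, (1 <= d)%nat ->
  exists delta0 : R, 0 < delta0 /\
  exists Cst : R, 0 < Cst /\
  forall delta : R, 0 < delta <= delta0 ->
  exists P0 : nat, forall P : nat, (P0 <= P)%nat ->
  forall q a : nat,
    (1 <= q)%nat -> INR q <= Rpower (INR P) delta ->
    (1 <= a <= q)%nat -> Nat.gcd a q = 1%nat ->
  forall alpha : R,
    Rabs (alpha - INR a / INR q) <= Rpower (INR P) (delta - INR d) ->
    Cmod (Cminus (F d P alpha)
            (Cmult (RtoC (/ (INR q ^ (2 * d + 1))))
                   (Cmult (Sqa d q a) (I d P (alpha - INR a / INR q)))))
      <= Cst * Rpower (INR P) (2 * INR d + 2 * delta).
Proof.
  intros d _.
  destruct (poly_growth_f d) as (A & B & _ & HB & Hf).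
  pose proof PI_RGT_0. pose proof (lt_0_INR (2 * d + 1) ltac:(lia)).
  exists 1. split; [lra|].
  exists (4 * INR (2 * d + 1) * (2 * PI * B + 2)). split; [apply Rmult_lt_0_compat; nra|].
  intros delta [Hdelta _]. exists 1%nat. intros P HP q a Hq Hqle _ _ alpha Halpha.
  assert (HP1 : 1 <= INR P) by (apply (le_INR 1); lia).
  destruct (Hf (INR P) ltac:(lra)) as [_ Hf_lip].
  set (L := 2 * PI * Rabs (alpha - INR a / INR q) * (B * INR P ^ d / INR P)).
  assert (HL : 0 <= L).
  { pose proof (Rabs_pos (alpha - INR a / INR q)). pose proof (pow_le (INR P) d ltac:(lra)).
    apply Rmult_le_pos; [nra|]. apply Rmult_le_pos; [nra|]. apply Rlt_le, Rinv_0_lt_compat. lra. }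
  eapply Rle_trans.
  - apply (major_arc_approx d P q a alpha L Hq HL); apply box_lipschitz_phase;
      auto using cos_1lipschitz, sin_1lipschitz; lra.
  - apply major_arc_error_le; assumption.
Qed.
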